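(* Let $\mathcal D_0$ be an open subset of $\mathcal D$ on which each map $\theta\mapsto\langle p_\theta,H_j\rangle$ ($j=1,\dots,n$) is continuous. Then $\Phi$ is differentiable on $\mathcal D_0$ and $$\frac{\partial\Phi}{\partial\theta_j}(\theta)=-\langle p_\theta,H_j\rangle,\qquad\theta\in\mathcal D_0,\ j=1,\dots,n.$$
   Context: Let $A$ be a finite or countable set, $\mathcal M_1^+(A)$ the probability distributions on $A$, $I(p)=\sum_a h_a(p_a)$ a generalised entropy (each $h_a:[0,1]\to\mathbb R$ continuous, strictly concave, $h_a(0)=h_a(1)=0$), $H_1,\dots,H_n:A\to\mathbb R$ bounded below, $\langle p,X\rangle=\sum_ap_aX(a)$. $p^*$ satisfies the variational principle with parameters $\theta\in\mathbb R^n$ if $+\infty>I(p^* )-\sum_j\theta_j\langle p^*,H_j\rangle\ge I(p)-\sum_j\theta_j\langle p,H_j\rangle$ for all $p\in\mathcal M_1^+(A)$. Let $\mathcal D$ be the set of $\theta$ for which such $p^*$ exists (it is unique), denoted $p_\theta$. For $U$ with $U_j=\langle p_\eta,H_j\rangle$ for some $\eta\in\mathcal D$, $S(U)=I(p_\eta)$. The Massieu function is $\Phi(\theta)=\sup_U\{S(U)-\sum_j\theta_jU_j\}$ (supremum over $U$ where $S$ is defined); for $\theta\in\mathcal D$ it equals $I(p_\theta)-\sum_j\theta_j\langle p_\theta,H_j\rangle$. *)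

From Stdlib Require Import Reals Lra Classical ClassicalEpsilon.
Open Scope R_scope.

(* The countable (or finite) alphabet A is represented as a subset of nat,
   given by a boolean predicate inA.  Functions on A are functions on nat
   whose values outside A are irrelevant. *)

Inductive ER : Type := Fin (r : R) | PInf | MInf.

Definition ER_add (x y : ER) : option ER :=
  match x, y with
  | Fin a, Fin b => Some (Fin (a + b))
  | PInf, MInf | MInf, PInf => None
  | PInf, _ | _, PInf => Some PInf
  | MInf, _ | _, MInf => Some MInf
  end.

(* (- t) * x, with the convention 0 * (+-oo) = 0 *)
Definition ER_mulneg (t : R) (x : ER) : ER :=
  match x with
  | Fin a => Fin (- t * a)
  | PInf => match Rlt_dec 0 t with
            | left _ => MInf
            | right _ => match Rlt_dec t 0 with left _ => PInf | right _ => Fin 0 end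
            end
  | MInf => match Rlt_dec 0 t with
            | left _ => PInf
            | right _ => match Rlt_dec t 0 with left _ => MInf | right _ => Fin 0 end
            end
  end.

Definition ER_le (x y : ER) : Prop :=
  match x, y with
  | MInf, _ => True
  | _, PInf => True
  | Fin a, Fin b => a <= b
  | _, _ => False
  end.

Fixpoint fsum (n : nat) (f : nat -> R) : R :=
  match n with O => 0 | S k => fsum k f + f k end.

(* Value of a series sum_a u a: its limit if the partial sums converge,
   +oo otherwise.  (All series below have terms bounded below by those of
   an absolutely convergent series, so divergence means divergence to +oo.) *)
Definition ser (u : nat -> R) : ER :=
  match excluded_middle_informative (exists s, Un_cv (fun N => sum_f_R0 u N) s) with
  | left Hs => Fin (proj1_sig (constructive_indefinite_description _ Hs))
  | right _ => PInf
  end.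

Definition is_distr (inA : nat -> bool) (p : nat -> R) : Prop :=
  (forall a, 0 <= p a) /\ (forall a, inA a = false -> p a = 0) /\
  infinite_sum p 1.

Definition Ient (inA : nat -> bool) (h : nat -> R -> R) (p : nat -> R) : ER :=
  ser (fun a => if inA a then h a (p a) else 0).

Definition expect (inA : nat -> bool) (p : nat -> R) (X : nat -> R) : ER :=
  ser (fun a => if inA a then p a * X a else 0).

Fixpoint objective (inA : nat -> bool) (h : nat -> R -> R) (H : nat -> nat -> R)
  (theta : nat -> R) (p : nat -> R) (k : nat) : option ER :=
  match k with
  | O => Some (Ient inA h p)
  | S k' => match objective inA h H theta p k' with
            | None => None
            | Some x => ER_add x (ER_mulneg (theta k') (expect inA p (H k')))
            end
  end.

Definition var_principle (inA : nat -> bool) (h : nat -> R -> R) (n : nat)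
  (H : nat -> nat -> R) (theta : nat -> R) (ps : nat -> R) : Prop :=
  is_distr inA ps /\
  exists c : R, objective inA h H theta ps n = Some (Fin c) /\
    forall p, is_distr inA p ->
      forall v, objective inA h H theta p n = Some v -> ER_le v (Fin c).

Definition Dset inA h n H (theta : nat -> R) : Prop :=
  exists ps, var_principle inA h n H theta ps.

(* p_theta (the unique maximiser when theta is in D) *)
Definition p_theta inA h n H (theta : nat -> R) : nat -> R :=
  match excluded_middle_informative (Dset inA h n H theta) with
  | left Hd => proj1_sig (constructive_indefinite_description _ Hd)
  | right _ => fun _ => 0
  end.

(* the values S(U) - theta.U, with U_j = <p_eta,H_j>, S(U) = I(p_eta), eta in D *)
Definition massieu_vals inA h n H (theta : nat -> R) (v : R) : Prop :=
  exists eta (s : R) (U : nat -> R),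
    Dset inA h n H eta /\
    Ient inA h (p_theta inA h n H eta) = Fin s /\
    (forall j, (j < n)%nat -> expect inA (p_theta inA h n H eta) (H j) = Fin (U j)) /\
    v = s - fsum n (fun j => theta j * U j).

Definition Phi inA h n H (theta : nat -> R) : ER :=
  let E := massieu_vals inA h n H theta in
  match excluded_middle_informative (bound E /\ exists x, E x) with
  | left Hb => Fin (proj1_sig (completeness E (proj1 Hb) (proj2 Hb)))
  | right _ => match excluded_middle_informative (exists x, E x) with
               | left _ => PInf
               | right _ => MInf
               end
  end.

From Stdlib Require Import Reals.
Open Scope R_scope.
From Stdlib Require Import Lra Lia ClassicalEpsilon.

(* At a point t of D the Massieu function is attained:
   Phi(t) = S(t) - t.e(t), where S(t) = I(p_t) and e_j(t) = <p_t, H_j>.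
   Since Phi(t') is a supremum over all U, in particular over U = e(t),
     Phi(t') >= S(t) - t'.e(t) = Phi(t) - (t' - t).e(t),
   i.e. -e(t) is a subgradient of Phi at t.  A function admitting, on an open
   set, a family of subgradients that is continuous at a point is
   differentiable there with that subgradient as gradient: the subgradient
   inequalities at t and at t' sandwich Phi(t') - Phi(t) + (t' - t).e(t)
   between 0 and (t' - t).(e(t) - e(t')). *)

Lemma fsum_ext n f g :
  (forall j, (j < n)%nat -> f j = g j) -> fsum n f = fsum n g.
Proof.
  induction n as [|n IH]; simpl; intros Hfg; [reflexivity|].
  rewrite IH by (intros; apply Hfg; lia). rewrite Hfg by lia. reflexivity.
Qed.

Lemma fsum_minus n f g : fsum n (fun j => f j - g j) = fsum n f - fsum n g.
Proof. induction n as [|n IH]; simpl; [ring|]. rewrite IH; ring. Qed.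

Lemma fsum_scal n c f : fsum n (fun j => c * f j) = c * fsum n f.
Proof. induction n as [|n IH]; simpl; [ring|]. rewrite IH; ring. Qed.

Lemma fsum_le n f g :
  (forall j, (j < n)%nat -> f j <= g j) -> fsum n f <= fsum n g.
Proof.
  induction n as [|n IH]; simpl; intros Hfg; [lra|].
  assert (fsum n f <= fsum n g) by (apply IH; intros; apply Hfg; lia).
  assert (f n <= g n) by (apply Hfg; lia). lra.
Qed.

Lemma common_delta (n : nat) (P : nat -> R -> Prop) :
  (forall j d d', 0 < d' <= d -> P j d -> P j d') ->
  (forall j, (j < n)%nat -> exists d, 0 < d /\ P j d) ->
  exists d, 0 < d /\ forall j, (j < n)%nat -> P j d.
Proof.
  intros Hmono; induction n as [|n IH]; intros Hex.
  - exists 1; split; [lra | intros; lia].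
  - destruct IH as [d1 [Hd1 HP1]]; [intros; apply Hex; lia|].
    destruct (Hex n) as [d2 [Hd2 HP2]]; [lia|].
    assert (Hmin : 0 < Rmin d1 d2) by (apply Rmin_pos; auto).
    exists (Rmin d1 d2); split; [exact Hmin|].
    intros j Hj; destruct (Nat.eq_dec j n) as [->|Hne].
    + apply Hmono with d2; [split; [exact Hmin | apply Rmin_r] | exact HP2].
    + apply Hmono with d1; [split; [exact Hmin | apply Rmin_l] | apply HP1; lia].
Qed.

Section SubgradientCriterion.

Variable n : nat.
Variable F : (nat -> R) -> R.
Variable g : nat -> (nat -> R) -> R.
Variable U : (nat -> R) -> Prop.

Hypothesis subgradient : forall t t', U t -> U t' ->
  F t + fsum n (fun j => g j t * (t' j - t j)) <= F t'.

Variable th : nat -> R.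
Hypothesis U_th : U th.
Hypothesis U_nbhd : exists r, 0 < r /\
  forall t', (forall j, (j < n)%nat -> Rabs (t' j - th j) < r) -> U t'.
Hypothesis g_cont : forall j, (j < n)%nat ->
  forall eps, 0 < eps -> exists delta, 0 < delta /\
    forall t', U t' -> (forall k, (k < n)%nat -> Rabs (t' k - th k) < delta) ->
      Rabs (g j t' - g j th) < eps.

Lemma subgradient_sandwich dt : U (fun j => th j + dt j) ->
  0 <= F (fun j => th j + dt j) - F th - fsum n (fun j => g j th * dt j) <=
       fsum n (fun j => (g j (fun k => th k + dt k) - g j th) * dt j).
Proof.
  intros Hth'; set (th' := fun j => th j + dt j) in *.
  pose proof (subgradient th th' U_th Hth') as lower.
  pose proof (subgradient th' th Hth' U_th) as upper.
  assert (Elow : fsum n (fun j => g j th * (th' j - th j)) =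
                 fsum n (fun j => g j th * dt j))
    by (apply fsum_ext; intros; unfold th'; cbv beta; ring).
  assert (Eup : fsum n (fun j => g j th' * (th j - th' j)) =
                - fsum n (fun j => g j th' * dt j)).
  { replace (- fsum n (fun j => g j th' * dt j))
      with (-1 * fsum n (fun j => g j th' * dt j)) by ring.
    rewrite <- fsum_scal; apply fsum_ext; intros; unfold th'; cbv beta; ring. }
  assert (Ediff : fsum n (fun j => (g j th' - g j th) * dt j) =
                  fsum n (fun j => g j th' * dt j) - fsum n (fun j => g j th * dt j)).
  { rewrite <- fsum_minus; apply fsum_ext; intros; ring. }
  rewrite Elow in lower; rewrite Eup in upper; rewrite Ediff; lra.
Qed.

Theorem differentiable_of_continuous_subgradient :
  forall eps, 0 < eps -> exists delta, 0 < delta /\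
    forall dt : nat -> R, (forall j, (j < n)%nat -> Rabs (dt j) < delta) ->
      U (fun j => th j + dt j) /\
      Rabs (F (fun j => th j + dt j) - F th - fsum n (fun j => g j th * dt j))
        <= eps * fsum n (fun j => Rabs (dt j)).
Proof.
  intros eps Heps.
  destruct U_nbhd as [r [Hr Hball]].
  destruct (common_delta n (fun j d => forall t', U t' ->
      (forall k, (k < n)%nat -> Rabs (t' k - th k) < d) ->
      Rabs (g j t' - g j th) < eps)) as [d [Hd Hg]].
  { intros j d0 d' Hd' Hp t' Ht' Hk; apply Hp; [exact Ht'|].
    intros k Hk'; specialize (Hk k Hk'); lra. }
  { intros j Hj; apply g_cont; assumption. }
  exists (Rmin r d); split; [apply Rmin_pos; assumption|].
  intros dt Hdt.
  assert (Hshift : forall k, (k < n)%nat ->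
            Rabs ((th k + dt k) - th k) < Rmin r d).
  { intros k Hk; replace (th k + dt k - th k) with (dt k) by ring; auto. }
  assert (Hth' : U (fun j => th j + dt j)).
  { apply Hball; intros k Hk; pose proof (Hshift k Hk); pose proof (Rmin_l r d); lra. }
  assert (Herr : fsum n (fun j => (g j (fun k => th k + dt k) - g j th) * dt j)
                 <= eps * fsum n (fun j => Rabs (dt j))).
  { rewrite <- fsum_scal; apply fsum_le; intros j Hj.
    assert (Hgj : Rabs (g j (fun k => th k + dt k) - g j th) < eps).
    { apply Hg; [exact Hj | exact Hth' |].
      intros k Hk; pose proof (Hshift k Hk); pose proof (Rmin_r r d); lra. }
    eapply Rle_trans; [apply Rle_abs|]; rewrite Rabs_mult.
    apply Rmult_le_compat_r; [apply Rabs_pos | lra]. }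
  pose proof (subgradient_sandwich dt Hth').
  split; [exact Hth'|]; rewrite Rabs_right; lra.
Qed.

End SubgradientCriterion.

(* Real part of an extended real, used to view Phi as a real function on the
   set where it is finite. *)
Definition fin_part (x : ER) : R := match x with Fin r => r | _ => 0 end.

Section Massieu.

Variable inA : nat -> bool.
Variable h : nat -> R -> R.
Variable n : nat.
Variable H : nat -> nat -> R.

Lemma objective_fin theta p s U k :
  Ient inA h p = Fin s ->
  (forall j, (j < k)%nat -> expect inA p (H j) = Fin (U j)) ->
  objective inA h H theta p k = Some (Fin (s - fsum k (fun j => theta j * U j))).
Proof.
  intros HI; induction k as [|k IH]; intros HU; simpl.
  - rewrite HI; do 2 f_equal; ring.
  - rewrite IH by (intros; apply HU; lia). rewrite (HU k) by lia.
    simpl; do 2 f_equal; ring.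
Qed.

Lemma Ient_fin_of_objective theta p k c :
  (forall j, (j < k)%nat -> exists u, expect inA p (H j) = Fin u) ->
  objective inA h H theta p k = Some (Fin c) -> exists s, Ient inA h p = Fin s.
Proof.
  revert c; induction k as [|k IH]; intros c HU Hobj; simpl in Hobj.
  - injection Hobj; eauto.
  - destruct (HU k) as [u Hu]; [lia|]. rewrite Hu in Hobj.
    destruct (objective inA h H theta p k) as [[r| |]|] eqn:E; simpl in Hobj;
      try discriminate.
    apply (IH r); [intros; apply HU; lia | reflexivity].
Qed.

Lemma p_theta_spec theta :
  Dset inA h n H theta -> var_principle inA h n H theta (p_theta inA h n H theta).
Proof.
  intros HD; unfold p_theta.
  destruct (excluded_middle_informative _) as [HD'|HD']; [|contradiction].
  destruct (constructive_indefinite_description _ HD'); assumption.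
Qed.

Lemma Phi_upper theta c v :
  Phi inA h n H theta = Fin c -> massieu_vals inA h n H theta v -> v <= c.
Proof.
  unfold Phi; destruct (excluded_middle_informative _) as [Hb|Hb].
  - intros Hc Hv; injection Hc as Heq; rewrite <- Heq.
    apply (proj1 (proj2_sig (completeness _ _ _))), Hv.
  - destruct (excluded_middle_informative _); discriminate.
Qed.

Lemma Phi_eq_max theta c :
  (forall v, massieu_vals inA h n H theta v -> v <= c) ->
  massieu_vals inA h n H theta c -> Phi inA h n H theta = Fin c.
Proof.
  intros Hub Hin; unfold Phi.
  destruct (excluded_middle_informative _) as [Hb|Hb].
  - f_equal. destruct (completeness _ _ _) as [m [Hm1 Hm2]]; simpl.
    apply Rle_antisym; [apply Hm2; intros x Hx; apply Hub, Hx | apply Hm1, Hin].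
  - exfalso; apply Hb; split; [exists c; intros x Hx; apply Hub, Hx | exists c; exact Hin].
Qed.

(* On D with finite expectations U, Phi(theta) = I(p_theta) - theta.U: the
   variational principle makes this Massieu value the largest one. *)
Lemma Phi_attained theta U :
  Dset inA h n H theta ->
  (forall j, (j < n)%nat -> expect inA (p_theta inA h n H theta) (H j) = Fin (U j)) ->
  exists s, Ient inA h (p_theta inA h n H theta) = Fin s /\
    Phi inA h n H theta = Fin (s - fsum n (fun j => theta j * U j)).
Proof.
  intros HD HU.
  destruct (p_theta_spec theta HD) as [_ [c [Hc Hmax]]].
  destruct (Ient_fin_of_objective theta (p_theta inA h n H theta) n c) as [s Hs];
    [eauto | exact Hc |].
  pose proof (objective_fin theta _ s U n Hs HU) as Hobj.
  rewrite Hc in Hobj; injection Hobj as ->.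
  exists s; split; [exact Hs|].
  apply Phi_eq_max.
  - intros v [eta [s' [U' [HDeta [Hs' [HU' ->]]]]]].
    destruct (p_theta_spec eta HDeta) as [Hdist _].
    exact (Hmax _ Hdist _ (objective_fin theta _ s' U' n Hs' HU')).
  - exists theta, s, U; auto.
Qed.

Lemma Phi_subgradient (D0 : (nat -> R) -> Prop) (e : nat -> (nat -> R) -> R) :
  (forall t, D0 t -> Dset inA h n H t) ->
  (forall j, (j < n)%nat -> forall t, D0 t ->
     expect inA (p_theta inA h n H t) (H j) = Fin (e j t)) ->
  forall t t', D0 t -> D0 t' ->
    fin_part (Phi inA h n H t) + fsum n (fun j => - e j t * (t' j - t j))
      <= fin_part (Phi inA h n H t').
Proof.
  intros D0_sub e_def t t' Ht Ht'.
  destruct (Phi_attained t (fun j => e j t)) as [s [Hs HPhi]];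
    [auto | intros; apply e_def; auto |].
  destruct (Phi_attained t' (fun j => e j t')) as [s' [_ HPhi']];
    [auto | intros; apply e_def; auto |].
  assert (Hle : s - fsum n (fun j => t' j * e j t) <= fin_part (Phi inA h n H t')).
  { rewrite HPhi'; simpl; apply (Phi_upper t'); [exact HPhi'|].
    exists t, s, (fun j => e j t); repeat split; auto. }
  assert (Elin : fsum n (fun j => - e j t * (t' j - t j)) =
                 fsum n (fun j => t j * e j t) - fsum n (fun j => t' j * e j t)).
  { rewrite <- fsum_minus; apply fsum_ext; intros; ring. }
  rewrite HPhi; simpl; lra.
Qed.

End Massieu.

Theorem mainTheorem7
  (inA : nat -> bool) (h : nat -> R -> R) (n : nat) (H : nat -> nat -> R)
  (* each h_a continuous on [0,1] *)
  (h_cont : forall a, inA a = true -> forall x, 0 <= x <= 1 ->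
     forall eps, 0 < eps -> exists delta, 0 < delta /\
       forall y, 0 <= y <= 1 -> Rabs (y - x) < delta -> Rabs (h a y - h a x) < eps)
  (* each h_a strictly concave on [0,1] *)
  (h_conc : forall a, inA a = true -> forall x y t, 0 <= x <= 1 -> 0 <= y <= 1 ->
     x <> y -> 0 < t < 1 ->
     t * h a x + (1 - t) * h a y < h a (t * x + (1 - t) * y))
  (h_0 : forall a, inA a = true -> h a 0 = 0)
  (h_1 : forall a, inA a = true -> h a 1 = 0)
  (* H_1, ..., H_n bounded below on A *)
  (H_bdd : forall j, (j < n)%nat -> exists m, forall a, inA a = true -> m <= H j a)
  (D0 : (nat -> R) -> Prop)
  (D0_open : forall theta, D0 theta -> exists r, 0 < r /\
     forall theta', (forall j, (j < n)%nat -> Rabs (theta' j - theta j) < r) -> D0 theta')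
  (D0_sub : forall theta, D0 theta -> Dset inA h n H theta)
  (e : nat -> (nat -> R) -> R)
  (e_def : forall j, (j < n)%nat -> forall theta, D0 theta ->
     expect inA (p_theta inA h n H theta) (H j) = Fin (e j theta))
  (e_cont : forall j, (j < n)%nat -> forall theta, D0 theta ->
     forall eps, 0 < eps -> exists delta, 0 < delta /\
       forall theta', D0 theta' -> (forall k, (k < n)%nat -> Rabs (theta' k - theta k) < delta) ->
         Rabs (e j theta' - e j theta) < eps) :
  forall theta, D0 theta ->
    exists phi : R, Phi inA h n H theta = Fin phi /\
    forall eps, 0 < eps -> exists delta, 0 < delta /\
      forall dt : nat -> R, (forall j, (j < n)%nat -> Rabs (dt j) < delta) ->
        exists v : R, Phi inA h n H (fun j => theta j + dt j) = Fin v /\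
          Rabs (v - phi - fsum n (fun j => - e j theta * dt j))
            <= eps * fsum n (fun j => Rabs (dt j)).
Proof.
  (* Phi is finite on D0, so it agrees there with its real part. *)
  assert (Phi_fin : forall t, D0 t ->
            Phi inA h n H t = Fin (fin_part (Phi inA h n H t))).
  { intros t Ht.
    destruct (Phi_attained inA h n H t (fun j => e j t)) as [s [_ ->]];
      [auto | intros; apply e_def; auto | reflexivity]. }
  intros theta Htheta.
  exists (fin_part (Phi inA h n H theta)); split; [auto|].
  assert (neg_e_cont : forall j, (j < n)%nat -> forall eps, 0 < eps ->
            exists delta, 0 < delta /\ forall t', D0 t' ->
              (forall k, (k < n)%nat -> Rabs (t' k - theta k) < delta) ->
              Rabs (- e j t' - - e j theta) < eps).
  { intros j Hj eps Heps.
    destruct (e_cont j Hj theta Htheta eps Heps) as [d [Hd Hcont]].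
    exists d; split; [exact Hd|]; intros t' Ht' Hclose.
    replace (- e j t' - - e j theta) with (- (e j t' - e j theta)) by ring.
    rewrite Rabs_Ropp; auto. }
  pose proof (differentiable_of_continuous_subgradient n
                (fun t => fin_part (Phi inA h n H t)) (fun j t => - e j t) D0
                (Phi_subgradient inA h n H D0 e D0_sub e_def)
                theta Htheta (D0_open theta Htheta) neg_e_cont) as Hdiff.
  intros eps Heps; destruct (Hdiff eps Heps) as [delta [Hdelta Hclose]].
  exists delta; split; [exact Hdelta|]; intros dt Hdt.
  destruct (Hclose dt Hdt) as [Hnear Hbound].
  exists (fin_part (Phi inA h n H (fun j => theta j + dt j))); split; auto.
Qed.
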